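(* Consider on $M_h$ with $2h=1$ the reduced cylindrical integrable system $(\ell_{12},\ell_{34})$. Its bifurcation diagram (set of critical values of $(\ell_{12},\ell_{34}):M_h\to\mathbb R^2$) is composed of the four straight lines $\ell_{34}=\pm(1\pm\ell_{12})$, which intersect transversally at $(\pm1,0)$ and $(0,\pm1)$.
   Context: $\mathbf L=(\ell_{12},\ell_{13},\ell_{14},\ell_{23},\ell_{24},\ell_{34})\in\mathbb R^6\cong\mathfrak{so}(4)^*$ with the Lie–Poisson bracket of $\mathfrak{so}(4)$ (extending $\ell_{ji}=-\ell_{ij}$: $\{\ell_{ij},\ell_{jk}\}=-\ell_{ik}$ for distinct $i,j,k$, and $\{\ell_{ij},\ell_{kl}\}=0$ when $\{i,j\}\cap\{k,l\}=\emptyset$). $M_h=\{\mathbf L:\sum_{i<j}\ell_{ij}^2=2h,\ \ell_{12}\ell_{34}-\ell_{13}\ell_{24}+\ell_{14}\ell_{23}=0\}\cong S^2\times S^2$ is a symplectic leaf. *)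

From Stdlib Require Import Reals.
Open Scope R_scope.

(* A point L = (l12,l13,l14,l23,l24,l34) of so(4)^* ~ R^6. *)
Record so4 := mkso4 { l12 : R; l13 : R; l14 : R; l23 : R; l24 : R; l34 : R }.

Definition cas1 (L : so4) : R :=
  l12 L ^ 2 + l13 L ^ 2 + l14 L ^ 2 + l23 L ^ 2 + l24 L ^ 2 + l34 L ^ 2.
Definition cas2 (L : so4) : R :=
  l12 L * l34 L - l13 L * l24 L + l14 L * l23 L.

Definition in_Mh (h : R) (L : so4) : Prop := cas1 L = 2 * h /\ cas2 L = 0.

Definition dcas1 (L v : so4) : R :=
  2 * (l12 L * l12 v + l13 L * l13 v + l14 L * l14 v
       + l23 L * l23 v + l24 L * l24 v + l34 L * l34 v).
Definition dcas2 (L v : so4) : R :=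
  l12 v * l34 L + l12 L * l34 v - l13 v * l24 L - l13 L * l24 v
  + l14 v * l23 L + l14 L * l23 v.

(* Tangent space of M_h at L (M_h is a regular level set of (cas1,cas2)
   for h > 0). *)
Definition tangent (L v : so4) : Prop := dcas1 L v = 0 /\ dcas2 L v = 0.

(* The map F = (l12, l34) : M_h -> R^2.  Its differential restricted to
   T_L M_h is v |-> (l12 v, l34 v) (F is linear). *)
Definition F_regular_point (L : so4) : Prop :=
  (exists v, tangent L v /\ l12 v = 1 /\ l34 v = 0) /\
  (exists w, tangent L w /\ l12 w = 0 /\ l34 w = 1).

Definition F_critical_point (h : R) (L : so4) : Prop :=
  in_Mh h L /\ ~ F_regular_point L.

Definition bifurcation_diagram (h : R) (x y : R) : Prop :=
  exists L, F_critical_point h L /\ l12 L = x /\ l34 L = y.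

Definition F_image (h : R) (x y : R) : Prop :=
  exists L, in_Mh h L /\ l12 L = x /\ l34 L = y.

Definition four_lines (x y : R) : Prop :=
  y = 1 + x \/ y = - (1 + x) \/ y = 1 - x \/ y = - (1 - x).

(** The self-dual/anti-self-dual splitting so(4) = so(3) + so(3) is
    [L+ = (lp1, lp2, lp3) = (l12 + l34, l13 - l24, l14 + l23)] and
    [L- = (lm1, lm2, lm3) = (l12 - l34, l13 + l24, l14 - l23)].
    In these coordinates the Casimirs become [|L+|^2 = cas1 + 2 cas2] and
    [|L-|^2 = cas1 - 2 cas2], so M_h is a product of two spheres of radius
    [sqrt (2h)], with tangent space [L+^perp x L-^perp].  Since
    [l12 + l34] and [l12 - l34] are the heights of [L+] and [L-], the map
    [(l12, l34)] is a linear image of the pair of height functions, and is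
    critical exactly where one of them sits at a pole:
    [(l12 + l34)^2 = 2h] or [(l12 - l34)^2 = 2h].  For [2h = 1] these are the
    four lines. *)

From Stdlib Require Import Reals Lra Psatz.
Open Scope R_scope.

Definition lp1 (L : so4) : R := l12 L + l34 L.
Definition lp2 (L : so4) : R := l13 L - l24 L.
Definition lp3 (L : so4) : R := l14 L + l23 L.
Definition lm1 (L : so4) : R := l12 L - l34 L.
Definition lm2 (L : so4) : R := l13 L + l24 L.
Definition lm3 (L : so4) : R := l14 L - l23 L.

(* The inverse of [L |-> (L+, L-)]. *)
Definition of_pm (p1 p2 p3 m1 m2 m3 : R) : so4 :=
  mkso4 ((p1 + m1) / 2) ((p2 + m2) / 2) ((p3 + m3) / 2)
        ((p3 - m3) / 2) ((m2 - p2) / 2) ((p1 - m1) / 2).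

Definition dot_p (L v : so4) : R := lp1 L * lp1 v + lp2 L * lp2 v + lp3 L * lp3 v.
Definition dot_m (L v : so4) : R := lm1 L * lm1 v + lm2 L * lm2 v + lm3 L * lm3 v.

Lemma sq_p_cas (L : so4) : lp1 L ^ 2 + lp2 L ^ 2 + lp3 L ^ 2 = cas1 L + 2 * cas2 L.
Proof. unfold lp1, lp2, lp3, cas1, cas2; ring. Qed.

Lemma sq_m_cas (L : so4) : lm1 L ^ 2 + lm2 L ^ 2 + lm3 L ^ 2 = cas1 L - 2 * cas2 L.
Proof. unfold lm1, lm2, lm3, cas1, cas2; ring. Qed.

Lemma in_Mh_spheres (h : R) (L : so4) :
  in_Mh h L ->
  lp1 L ^ 2 + lp2 L ^ 2 + lp3 L ^ 2 = 2 * h /\ lm1 L ^ 2 + lm2 L ^ 2 + lm3 L ^ 2 = 2 * h.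
Proof. intros [H1 H2]; rewrite sq_p_cas, sq_m_cas, H1, H2; split; ring. Qed.

Lemma tangent_iff_pm (L v : so4) : tangent L v <-> dot_p L v = 0 /\ dot_m L v = 0.
Proof.
  assert (Ep : dot_p L v = dcas1 L v / 2 + dcas2 L v)
    by (unfold dot_p, lp1, lp2, lp3, dcas1, dcas2; field).
  assert (Em : dot_m L v = dcas1 L v / 2 - dcas2 L v)
    by (unfold dot_m, lm1, lm2, lm3, dcas1, dcas2; field).
  unfold tangent; rewrite Ep, Em; split; intros [H1 H2]; split; lra.
Qed.

Lemma dot_p_of_pm (L : so4) (p1 p2 p3 m1 m2 m3 : R) :
  dot_p L (of_pm p1 p2 p3 m1 m2 m3) = lp1 L * p1 + lp2 L * p2 + lp3 L * p3.
Proof. unfold dot_p, lp1, lp2, lp3, of_pm; simpl; field. Qed.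

Lemma dot_m_of_pm (L : so4) (p1 p2 p3 m1 m2 m3 : R) :
  dot_m L (of_pm p1 p2 p3 m1 m2 m3) = lm1 L * m1 + lm2 L * m2 + lm3 L * m3.
Proof. unfold dot_m, lm1, lm2, lm3, of_pm; simpl; field. Qed.

Lemma sum_sq_eq0 (a b : R) : a ^ 2 + b ^ 2 = 0 -> a = 0 /\ b = 0.
Proof. intro H; split; nra. Qed.

Lemma sq_eq1 (a : R) : a ^ 2 = 1 <-> a = 1 \/ a = -1.
Proof.
  split.
  - intro H.
    assert (Hf : (a - 1) * (a + 1) = 0) by nra.
    destruct (Rmult_integral _ _ Hf); [left | right]; lra.
  - intros [-> | ->]; ring.
Qed.

(** Away from the poles of the sphere, every height can be prescribed to a
    tangent vector. *)
Lemma orthogonal_completion (a1 a2 a3 x : R) :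
  a2 ^ 2 + a3 ^ 2 <> 0 -> exists y z, a1 * x + a2 * y + a3 * z = 0.
Proof.
  intro Hs.
  exists (- a1 * x * a2 / (a2 ^ 2 + a3 ^ 2)), (- a1 * x * a3 / (a2 ^ 2 + a3 ^ 2)).
  field_simplify_eq; [ring | exact Hs].
Qed.

Lemma F_regular_off_poles (L : so4) :
  lp2 L ^ 2 + lp3 L ^ 2 <> 0 -> lm2 L ^ 2 + lm3 L ^ 2 <> 0 ->
  forall p q, exists v, tangent L v /\ l12 v = p /\ l34 v = q.
Proof.
  intros Hp Hm p q.
  destruct (orthogonal_completion (lp1 L) _ _ (p + q) Hp) as [y [z Hyz]].
  destruct (orthogonal_completion (lm1 L) _ _ (p - q) Hm) as [y' [z' Hyz']].
  exists (of_pm (p + q) y z (p - q) y' z').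
  rewrite tangent_iff_pm, dot_p_of_pm, dot_m_of_pm.
  simpl; repeat split; auto; field.
Qed.

Lemma not_F_regular_at_pole (L : so4) :
  (lp2 L = 0 /\ lp3 L = 0 /\ lp1 L <> 0) \/ (lm2 L = 0 /\ lm3 L = 0 /\ lm1 L <> 0) ->
  ~ F_regular_point L.
Proof.
  intros Hpole [[v [Hv [V1 V2]]] _].
  apply tangent_iff_pm in Hv as [Hp Hm].
  unfold dot_p, dot_m in Hp, Hm.
  assert (Hvp : lp1 v = 1) by (unfold lp1; lra).
  assert (Hvm : lm1 v = 1) by (unfold lm1; lra).
  destruct Hpole as [[E2 [E3 E1]] | [E2 [E3 E1]]].
  - rewrite E2, E3, Hvp in Hp; apply E1; lra.
  - rewrite E2, E3, Hvm in Hm; apply E1; lra.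
Qed.

Lemma F_critical_iff (h : R) (L : so4) :
  0 < h -> in_Mh h L ->
  (~ F_regular_point L <-> lp1 L ^ 2 = 2 * h \/ lm1 L ^ 2 = 2 * h).
Proof.
  intros Hh HM; destruct (in_Mh_spheres h L HM) as [Sp Sm]; split.
  - intro Hcrit.
    destruct (Req_dec (lp1 L ^ 2) (2 * h)) as [Ep | Ep]; [now left|].
    destruct (Req_dec (lm1 L ^ 2) (2 * h)) as [Em | Em]; [now right|].
    exfalso; apply Hcrit.
    split; apply F_regular_off_poles; lra.
  - intros Hpole; apply not_F_regular_at_pole.
    destruct Hpole as [E | E]; [left | right].
    + destruct (sum_sq_eq0 (lp2 L) (lp3 L)) as [E2 E3]; [lra|].
      repeat split; auto; intro E1; rewrite E1 in E; lra.
    + destruct (sum_sq_eq0 (lm2 L) (lm3 L)) as [E2 E3]; [lra|].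
      repeat split; auto; intro E1; rewrite E1 in E; lra.
Qed.

Lemma bifurcation_diagram_iff (h x y : R) :
  0 < h ->
  bifurcation_diagram h x y <->
  F_image h x y /\ ((x + y) ^ 2 = 2 * h \/ (x - y) ^ 2 = 2 * h).
Proof.
  intro Hh; split.
  - intros [L [[HM Hcrit] [<- <-]]].
    split; [now exists L|].
    exact (proj1 (F_critical_iff h L Hh HM) Hcrit).
  - intros [[L [HM [<- <-]]] Hpole].
    exists L; split; [split|]; auto.
    exact (proj2 (F_critical_iff h L Hh HM) Hpole).
Qed.

Lemma four_lines_iff (x y : R) :
  four_lines x y <-> (x + y) ^ 2 = 1 \/ (x - y) ^ 2 = 1.
Proof. unfold four_lines; rewrite !sq_eq1; lra. Qed.

Lemma F_image_on_axes (h x y : R) : x * y = 0 -> x ^ 2 + y ^ 2 = 2 * h -> F_image h x y.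
Proof.
  intros Hxy Hn; exists (mkso4 x 0 0 0 0 y).
  unfold in_Mh, cas1, cas2; simpl; repeat split; nra.
Qed.

Theorem proposition8 :
  (* 2h = 1 *)
  let h := 1 / 2 in
  (* the bifurcation diagram is made of (the parts inside the image of F)
     of the four lines l34 = +-(1 +- l12) *)
  (forall x y : R,
     bifurcation_diagram h x y <-> (F_image h x y /\ four_lines x y)) /\
  (* the pairwise intersection points (+-1,0), (0,+-1) belong to it *)
  bifurcation_diagram h 1 0 /\ bifurcation_diagram h (-1) 0 /\
  bifurcation_diagram h 0 1 /\ bifurcation_diagram h 0 (-1).
Proof.
  intro h.
  assert (Hh : 0 < h) by (unfold h; lra).
  assert (H2h : 2 * h = 1) by (unfold h; field).
  assert (Hdiag : forall x y, bifurcation_diagram h x y <-> F_image h x y /\ four_lines x y).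
  { intros x y; rewrite bifurcation_diagram_iff, four_lines_iff, H2h by exact Hh; tauto. }
  split; [exact Hdiag|].
  repeat split; apply Hdiag; split;
    solve [apply F_image_on_axes; lra | unfold four_lines; lra].
Qed.
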